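(* Let $a>0$, $b>0$, $q\in(0,1)$ and $t>1$. Then \[ a\gamma - b\ln(1-q) + a\psi(t) - b\psi_q(t) > 0 . \]
   Context: $\gamma$ denotes the Euler–Mascheroni constant and $\psi(t)=\Gamma'(t)/\Gamma(t)$ is the digamma function for $t>0$, where $\Gamma$ is Euler's Gamma function. For $q\in(0,1)$ and $t>0$, the $q$-Gamma function is $\Gamma_q(t)=(1-q)^{1-t}\prod_{n=1}^{\infty}\frac{1-q^n}{1-q^{t+n}}$, and $\psi_q(t)=\frac{d}{dt}\ln\Gamma_q(t)=\Gamma_q'(t)/\Gamma_q(t)$. *)

From Stdlib Require Import Reals.
From Coquelicot Require Import Coquelicot.
Open Scope R_scope.

Definition Gamma (t : R) : R :=
  RInt_gen (fun x => Rpower x (t - 1) * exp (- x)) (at_right 0) (Rbar_locally p_infty).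

Definition digamma (t : R) : R := Derive (fun s => ln (Gamma s)) t.

Definition euler_gamma : R :=
  real (Lim_seq (fun n => sum_f_R0 (fun k => / INR (S k)) n - ln (INR (S n)))).

Fixpoint qGamma_partial (q t : R) (N : nat) : R :=
  match N with
  | O => 1
  | S M => qGamma_partial q t M *
           ((1 - q ^ (S M)) / (1 - Rpower q (t + INR (S M))))
  end.

Definition qGamma (q t : R) : R :=
  Rpower (1 - q) (1 - t) * real (Lim_seq (qGamma_partial q t)).

Definition qdigamma (q t : R) : R := Derive (fun s => ln (qGamma q s)) t.

From Stdlib Require Import Reals Lra Lia Psatz Classical.
From Coquelicot Require Import Coquelicot.
Open Scope R_scope.

(* On the q-side, Gamma_q(t) = (1 - q)^(1 - t) P(t) where the product P is
   positive and decreasing in t, so every forward difference quotient of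
   ln Gamma_q is at most -ln (1 - q); hence psi_q(t) <= -ln (1 - q).

   On the classical side, ln Gamma is convex (Hölder's inequality) and satisfies
   ln Gamma(s + 1) = ln Gamma(s) + ln s.  For 0 < h <= 1, the slope of ln Gamma on
   [t + m + 1, t + m + 1 + h] is at least its slope ln (t + m) on [t + m, t + m + 1],
   and moving back to [t, t + h] costs at most h (H_m - 1 + 1/t).  Hence
   psi(t) >= 1 - 1/t - (H_m - ln (m + 1)) for every m, and letting m grow gives
   gamma + psi(t) >= 1 - 1/t > 0. *)

Lemma exp_le x y : x <= y -> exp x <= exp y.
Proof. intros [H | ->]; [left; apply exp_increasing | right]; auto. Qed.

Lemma ln_le_sub_1 y : 0 < y -> ln y <= y - 1.
Proof. intros Hy. pose proof (exp_ineq1_le (ln y)) as H. rewrite exp_ln in H; lra. Qed.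

Lemma ln_lt_0 x : 0 < x < 1 -> ln x < 0.
Proof. intros Hx. rewrite <- ln_1. apply ln_increasing; lra. Qed.

Lemma ln_add_sub_le a h : 0 < a -> 0 <= h -> ln (a + h) - ln a <= h / a.
Proof.
  intros Ha Hh.
  rewrite <- ln_div by lra.
  eapply Rle_trans; [apply ln_le_sub_1, Rdiv_lt_0_compat; lra|].
  right. field. lra.
Qed.

Lemma ln_add_sub_ge a h : 0 < a -> 0 <= h -> h / (a + h) <= ln (a + h) - ln a.
Proof.
  intros Ha Hh.
  pose proof (ln_le_sub_1 (a / (a + h)) ltac:(apply Rdiv_lt_0_compat; lra)) as H.
  rewrite ln_div in H by lra.
  replace (a / (a + h) - 1) with (- (h / (a + h))) in H by (field; lra).
  lra.
Qed.

Lemma exp_neg_div_le_one_sub x : 0 <= x < 1 -> exp (- x / (1 - x)) <= 1 - x.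
Proof.
  intros Hx.
  pose proof (exp_ineq1_le (x / (1 - x))) as H.
  replace (- x / (1 - x)) with (- (x / (1 - x))) by (field; lra).
  rewrite exp_Ropp.
  replace (1 - x) with (/ (1 + x / (1 - x))) at 2 by (field; lra).
  apply Rinv_le_contravar; [|exact H].
  assert (0 <= x / (1 - x)) by (apply Rdiv_le_0_compat; lra). lra.
Qed.

Lemma mul_div_le c A I : 0 <= c -> 0 < A -> I <= A -> c / A * I <= c.
Proof.
  intros Hc HA HI. replace (c / A * I) with (c * (I / A)) by (field; lra).
  rewrite <- (Rmult_1_r c) at 2. apply Rmult_le_compat_l; [lra|].
  apply Rle_div_l; lra.
Qed.

Lemma exp_convex u v lam : 0 <= lam <= 1 ->
  exp (lam * u + (1 - lam) * v) <= lam * exp u + (1 - lam) * exp v.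
Proof.
  intros Hl. set (m := lam * u + (1 - lam) * v).
  replace (exp u) with (exp m * exp (u - m)) by (rewrite <- exp_plus; f_equal; ring).
  replace (exp v) with (exp m * exp (v - m)) by (rewrite <- exp_plus; f_equal; ring).
  pose proof (exp_ineq1_le (u - m)). pose proof (exp_ineq1_le (v - m)).
  pose proof (exp_pos m).
  assert (lam * (u - m) + (1 - lam) * (v - m) = 0) by (unfold m; ring).
  assert (lam * (1 + (u - m)) <= lam * exp (u - m)) by (apply Rmult_le_compat_l; lra).
  assert ((1 - lam) * (1 + (v - m)) <= (1 - lam) * exp (v - m))
    by (apply Rmult_le_compat_l; lra).
  replace (lam * (exp m * exp (u - m)) + (1 - lam) * (exp m * exp (v - m)))
    with (exp m * (lam * exp (u - m) + (1 - lam) * exp (v - m))) by ring.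
  rewrite <- (Rmult_1_r (exp m)) at 1.
  apply Rmult_le_compat_l; lra.
Qed.

(* [Lim_seq] is defined for every sequence (as the mean of [LimSup_seq] and
   [LimInf_seq]), so none of these bounds needs convergence. *)
Lemma real_Lim_seq_bounds (u : nat -> R) m M :
  (forall n, m <= u n <= M) ->
  Lim_seq u = Finite (real (Lim_seq u)) /\ m <= real (Lim_seq u) <= M.
Proof.
  intros H.
  assert (Hm := Lim_seq_le_loc (fun _ => m) u (ex_intro _ 0%nat (fun n _ => proj1 (H n)))).
  assert (HM := Lim_seq_le_loc u (fun _ => M) (ex_intro _ 0%nat (fun n _ => proj2 (H n)))).
  rewrite Lim_seq_const in Hm, HM.
  destruct (Lim_seq u); simpl in *; tauto.
Qed.

(* [real] sends an infinite limit to [0], hence the sign condition on [M]. *)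
Lemma real_Lim_seq_le (u : nat -> R) M :
  0 <= M -> (forall n, u n <= M) -> real (Lim_seq u) <= M.
Proof.
  intros HM H.
  assert (H' := Lim_seq_le_loc u (fun _ => M) (ex_intro _ 0%nat (fun n _ => H n))).
  rewrite Lim_seq_const in H'.
  destruct (Lim_seq u); simpl in *; lra.
Qed.

Lemma real_Lim_seq_le_compat (u v : nat -> R) m M :
  (forall n, m <= u n <= M) -> (forall n, m <= v n <= M) -> (forall n, u n <= v n) ->
  real (Lim_seq u) <= real (Lim_seq v).
Proof.
  intros Hu Hv H.
  destruct (real_Lim_seq_bounds u m M Hu) as [Eu _].
  destruct (real_Lim_seq_bounds v m M Hv) as [Ev _].
  assert (H' := Lim_seq_le_loc u v (ex_intro _ 0%nat (fun n _ => H n))).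
  rewrite Eu, Ev in H'. exact H'.
Qed.

(* Coquelicot's [Derive f t] is [real] of the limit of the forward quotients
   along [h = 1 / (n + 1)], whether or not [f] is differentiable. *)
Lemma Derive_forward_seq (f : R -> R) t :
  Derive f t = real (Lim_seq (fun n => (f (t + / (INR n + 1)) - f t) / / (INR n + 1))).
Proof.
  unfold Derive, Lim. simpl Rbar_loc_seq. f_equal.
  apply Lim_seq_ext. intro n. now rewrite Rplus_0_l.
Qed.

Lemma inv_succ_bounds n : 0 < / (INR n + 1) <= 1.
Proof.
  pose proof (pos_INR n). split.
  - apply Rinv_0_lt_compat; lra.
  - rewrite <- Rinv_1. apply Rinv_le_contravar; lra.
Qed.

Lemma Derive_le_of_forward (f : R -> R) t M : 0 <= M ->
  (forall h, 0 < h <= 1 -> (f (t + h) - f t) / h <= M) -> Derive f t <= M.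
Proof.
  intros HM H. rewrite Derive_forward_seq.
  apply real_Lim_seq_le; auto. intro n. apply H, inv_succ_bounds.
Qed.

Lemma Derive_ge_of_forward (f : R -> R) t m M :
  (forall h, 0 < h <= 1 -> m <= (f (t + h) - f t) / h <= M) -> m <= Derive f t.
Proof.
  intros H. rewrite Derive_forward_seq.
  apply (real_Lim_seq_bounds _ m M). intro n. apply H, inv_succ_bounds.
Qed.

(** * The q-Gamma function *)

Section QGamma.
Variable q : R.
Hypothesis Hq : 0 < q < 1.

Lemma Rpower_q_bounds s : 0 < s -> 0 < Rpower q s < 1.
Proof.
  intros Hs. split; [apply exp_pos|].
  rewrite <- exp_0. apply exp_increasing. pose proof (ln_lt_0 q Hq). nra.
Qed.

Lemma Rpower_q_antitone s1 s2 : s1 <= s2 -> Rpower q s2 <= Rpower q s1.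
Proof. intros H. apply exp_le. pose proof (ln_lt_0 q Hq). nra. Qed.

Lemma pow_q_bounds n : 0 < q ^ S n <= q.
Proof.
  split; [apply pow_lt; lra|]. simpl.
  assert (q ^ n <= 1) by (rewrite <- (pow1 n); apply pow_incr; lra). nra.
Qed.

Definition qGamma_factor s n := (1 - q ^ S n) / (1 - Rpower q (s + INR (S n))).

Lemma qGamma_partial_S s N :
  qGamma_partial q s (S N) = qGamma_partial q s N * qGamma_factor s N.
Proof. reflexivity. Qed.

Lemma qGamma_factor_bounds s n : 0 < s -> 1 - q ^ S n <= qGamma_factor s n <= 1.
Proof.
  intros Hs. unfold qGamma_factor.
  rewrite Rpower_plus, Rpower_pow by lra.
  pose proof (Rpower_q_bounds s Hs). pose proof (pow_q_bounds n).
  assert (0 < Rpower q s * q ^ S n < q ^ S n) by nra.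
  split.
  - assert (0 <= (1 - q ^ S n) * (Rpower q s * q ^ S n)) by (apply Rmult_le_pos; lra).
    apply Rle_div_r; [lra|nra].
  - apply Rle_div_l; lra.
Qed.

Lemma qGamma_factor_antitone s1 s2 n : 0 < s1 <= s2 ->
  qGamma_factor s2 n <= qGamma_factor s1 n.
Proof.
  intros Hs. unfold qGamma_factor.
  rewrite !Rpower_plus, !Rpower_pow by lra.
  pose proof (Rpower_q_bounds s1 ltac:(lra)). pose proof (pow_q_bounds n).
  pose proof (Rpower_q_antitone s1 s2 ltac:(lra)).
  apply Rmult_le_compat_l; [lra|].
  apply Rinv_le_contravar; nra.
Qed.

(* [exp (- x / (1 - x)) <= 1 - x] with [x = q ^ (n + 1) <= q], summed over [n]. *)
Lemma qGamma_partial_lower s N : 0 < s ->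
  exp (- (q - q ^ S N) / (1 - q) ^ 2) <= qGamma_partial q s N.
Proof.
  intros Hs. induction N as [|N IH].
  - simpl. replace (- (q - q * 1) / ((1 - q) * ((1 - q) * 1))) with 0 by (field; lra).
    rewrite exp_0; lra.
  - rewrite qGamma_partial_S.
    destruct (qGamma_factor_bounds s N Hs) as [F _].
    pose proof (pow_q_bounds N) as Hx. set (x := q ^ S N) in *.
    replace (- (q - q ^ S (S N)) / (1 - q) ^ 2)
      with (- (q - x) / (1 - q) ^ 2 + - x / (1 - q)) by (unfold x; simpl; field; lra).
    rewrite exp_plus.
    assert (exp (- x / (1 - q)) <= 1 - x).
    { eapply Rle_trans; [|apply exp_neg_div_le_one_sub; lra].
      apply exp_le. unfold Rdiv.
      assert (/ (1 - x) <= / (1 - q)) by (apply Rinv_le_contravar; lra). nra. }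
    apply Rmult_le_compat; try (left; apply exp_pos); lra.
Qed.

Definition qGamma_partial_lb := exp (- q / (1 - q) ^ 2).

Lemma qGamma_partial_bounds s N : 0 < s ->
  qGamma_partial_lb <= qGamma_partial q s N <= 1.
Proof.
  intros Hs. split.
  - eapply Rle_trans; [|apply qGamma_partial_lower; auto].
    apply exp_le. unfold Rdiv. apply Rmult_le_compat_r.
    + left. apply Rinv_0_lt_compat, pow_lt. lra.
    + pose proof (pow_q_bounds N). lra.
  - induction N as [|N IH]; [simpl; lra|]. rewrite qGamma_partial_S.
    destruct (qGamma_factor_bounds s N Hs).
    pose proof (qGamma_partial_lower s N Hs). pose proof (exp_pos (- (q - q ^ S N) / (1 - q) ^ 2)).
    pose proof (pow_q_bounds N). nra.
Qed.

Lemma qGamma_partial_antitone s1 s2 N : 0 < s1 <= s2 ->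
  qGamma_partial q s2 N <= qGamma_partial q s1 N.
Proof.
  intros Hs. induction N as [|N IH]; [simpl; lra|]. rewrite !qGamma_partial_S.
  destruct (qGamma_factor_bounds s2 N) as [F _]; [lra|].
  pose proof (qGamma_partial_bounds s2 N ltac:(lra)). pose proof (exp_pos (- q / (1 - q) ^ 2)).
  pose proof (pow_q_bounds N). unfold qGamma_partial_lb in *.
  apply Rmult_le_compat; try lra. apply qGamma_factor_antitone; lra.
Qed.

Definition qGamma_prod s := real (Lim_seq (qGamma_partial q s)).

Lemma qGamma_prod_bounds s : 0 < s -> qGamma_partial_lb <= qGamma_prod s <= 1.
Proof. intros Hs. apply (real_Lim_seq_bounds _ _ _ (fun N => qGamma_partial_bounds s N Hs)). Qed.

Lemma qGamma_prod_pos s : 0 < s -> 0 < qGamma_prod s.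
Proof.
  intros Hs. eapply Rlt_le_trans; [apply exp_pos|]. apply (qGamma_prod_bounds s Hs).
Qed.

Lemma qGamma_prod_antitone s1 s2 : 0 < s1 <= s2 -> qGamma_prod s2 <= qGamma_prod s1.
Proof.
  intros Hs. apply (real_Lim_seq_le_compat _ _ qGamma_partial_lb 1).
  - intro N. apply qGamma_partial_bounds. lra.
  - intro N. apply qGamma_partial_bounds. lra.
  - intro N. apply qGamma_partial_antitone. lra.
Qed.

Lemma ln_qGamma s : 0 < s -> ln (qGamma q s) = (1 - s) * ln (1 - q) + ln (qGamma_prod s).
Proof.
  intros Hs. unfold qGamma. fold (qGamma_prod s).
  rewrite ln_mult, ln_Rpower; [reflexivity | apply exp_pos | apply qGamma_prod_pos, Hs].
Qed.

Lemma qdigamma_le t : 0 < t -> qdigamma q t <= - ln (1 - q).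
Proof.
  intros Ht. pose proof (ln_lt_0 (1 - q) ltac:(lra)).
  apply Derive_le_of_forward; [lra|]. intros h Hh.
  rewrite !ln_qGamma by lra.
  assert (ln (qGamma_prod (t + h)) <= ln (qGamma_prod t)).
  { apply ln_le; [apply qGamma_prod_pos; lra|]. apply qGamma_prod_antitone. lra. }
  apply Rle_div_l; lra.
Qed.

End QGamma.

(** * Euler's Gamma function *)

Lemma filter_prod_pos (P : R -> R -> Prop) :
  (forall a b, 0 < a -> 0 < b -> P a b) ->
  filter_prod (at_right 0) (Rbar_locally p_infty) (fun ab => P (fst ab) (snd ab)).
Proof.
  intros H. apply Filter_prod with (fun a => 0 < a) (fun b => 0 < b).
  - exists (mkposreal 1 Rlt_0_1). intros; auto.
  - exists 0. auto.
  - intros a b Ha Hb. simpl. auto.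
Qed.

Lemma ball_Rabs (c : R) (e : posreal) (y : R) :
  @ball R_UniformSpace c e y <-> Rabs (y - c) < e.
Proof. reflexivity. Qed.

Section ImproperIntegral.
Variable f : R -> R.
Hypothesis f_cont : forall s, 0 < s -> continuous f s.
Hypothesis f_ge0 : forall s, 0 < s -> 0 <= f s.

Lemma ex_RInt_pos a b : 0 < a -> 0 < b -> ex_RInt f a b.
Proof.
  intros Ha Hb. apply (ex_RInt_continuous (V := R_CompleteNormedModule)).
  intros s Hs. apply f_cont.
  assert (0 < Rmin a b) by (apply Rmin_glb_lt; auto). lra.
Qed.

Lemma is_RInt_pos a b : 0 < a -> 0 < b -> is_RInt f a b (RInt f a b).
Proof.
  intros Ha Hb. apply (RInt_correct (V := R_CompleteNormedModule)), ex_RInt_pos; auto.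
Qed.

Lemma RInt_le_RInt_wider a a0 b0 b : 0 < a -> a <= a0 -> a0 <= b0 -> b0 <= b ->
  RInt f a0 b0 <= RInt f a b.
Proof.
  intros Ha H1 H2 H3.
  rewrite <- (RInt_Chasles f a a0 b) by (apply ex_RInt_pos; lra).
  rewrite <- (RInt_Chasles f a0 b0 b) by (apply ex_RInt_pos; lra).
  assert (0 <= RInt f a a0)
    by (apply RInt_ge_0; auto; [apply ex_RInt_pos; lra | intros; apply f_ge0; lra]).
  assert (0 <= RInt f b0 b)
    by (apply RInt_ge_0; auto; [apply ex_RInt_pos; lra | intros; apply f_ge0; lra]).
  simpl. unfold plus; simpl. lra.
Qed.

Definition compact_integrals y := exists a b, 0 < a < b /\ y = RInt f a b.

(* Monotonicity in the bounds turns the supremum into the limit. *)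
Lemma is_RInt_gen_sup l :
  is_lub compact_integrals l -> is_RInt_gen f (at_right 0) (Rbar_locally p_infty) l.
Proof.
  intros [Hub Hleast] P [eps Heps].
  destruct (classic (exists a0 b0, 0 < a0 < b0 /\ l - eps < RInt f a0 b0))
    as [[a0 [b0 [Hab0 Hlt]]] | Hno].
  - apply Filter_prod with (fun a => 0 < a < a0) (fun b => b0 < b).
    + exists (mkposreal a0 (proj1 Hab0)). intros y Hy Hy0.
      rewrite ball_Rabs, Rminus_0_r in Hy. apply Rabs_def2 in Hy. simpl in Hy. lra.
    + exists b0. auto.
    + intros a b Ha Hb. exists (RInt f a b). split.
      * apply is_RInt_pos; simpl; lra.
      * apply Heps.
        assert (RInt f a b <= l) by (apply Hub; exists a, b; simpl; split; [lra | auto]).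
        assert (RInt f a0 b0 <= RInt f a b) by (apply RInt_le_RInt_wider; simpl; lra).
        rewrite ball_Rabs. apply Rabs_def1; destruct eps; simpl in *; lra.
  - exfalso.
    assert (l <= l - eps).
    { apply Hleast. intros y [a [b [Hab ->]]].
      apply Rnot_lt_le. intro Hc. apply Hno. exists a, b. auto. }
    destruct eps; simpl in *; lra.
Qed.

Lemma compact_integrals_lub M :
  (forall a b, 0 < a < b -> RInt f a b <= M) -> { l | is_lub compact_integrals l }.
Proof.
  intros HM. apply completeness.
  - exists M. intros y [a [b [Hab ->]]]. apply HM; auto.
  - exists (RInt f 1 2). exists 1, 2. split; [lra | auto].
Qed.

End ImproperIntegral.

Definition gamma_kernel x s := Rpower s (x - 1) * exp (- s).

Lemma gamma_kernel_exp x s : gamma_kernel x s = exp ((x - 1) * ln s + - s).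
Proof. unfold gamma_kernel, Rpower. now rewrite exp_plus. Qed.

Lemma gamma_kernel_pos x s : 0 < gamma_kernel x s.
Proof. rewrite gamma_kernel_exp. apply exp_pos. Qed.

Lemma gamma_kernel_continuous x s : 0 < s -> continuous (gamma_kernel x) s.
Proof.
  intros Hs. apply (ex_derive_continuous (K := R_AbsRing) (V := R_NormedModule)).
  unfold gamma_kernel, Rpower. auto_derive. exact Hs.
Qed.

(* From [ln u <= u - 1] at [u = s / (2 x)]. *)
Lemma gamma_kernel_le_exp_half x s : 1 <= x -> 0 < s ->
  gamma_kernel x s <= exp ((x - 1) * ln (2 * x)) * exp (- s / 2).
Proof.
  intros Hx Hs. rewrite gamma_kernel_exp, <- exp_plus. apply exp_le.
  assert (Hu : 0 < s / (2 * x)) by (apply Rdiv_lt_0_compat; lra).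
  pose proof (ln_le_sub_1 _ Hu) as H.
  rewrite ln_div in H by lra.
  assert (s / (2 * x) * (x - 1) <= s / 2).
  { apply Rmult_le_reg_r with (2 * x); [lra|].
    replace (s / (2 * x) * (x - 1) * (2 * x)) with (s * (x - 1)) by (field; lra).
    nra. }
  assert ((x - 1) * (ln s - ln (2 * x)) <= (x - 1) * (s / (2 * x) - 1))
    by (apply Rmult_le_compat_l; lra).
  lra.
Qed.

Lemma is_RInt_exp_half a b :
  is_RInt (fun s => exp (- s / 2)) a b (2 * exp (- a / 2) - 2 * exp (- b / 2)).
Proof.
  replace (2 * exp (- a / 2) - 2 * exp (- b / 2)) with
    (minus ((fun s => -2 * exp (- s / 2)) b) ((fun s => -2 * exp (- s / 2)) a))
    by (unfold minus, plus, opp; simpl; ring).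
  apply (is_RInt_derive (V := R_CompleteNormedModule) (fun s => -2 * exp (- s / 2))).
  - intros s _. auto_derive; auto. unfold Rdiv. field.
  - intros s _. apply (ex_derive_continuous (K := R_AbsRing) (V := R_NormedModule)).
    auto_derive. auto.
Qed.

Lemma RInt_gamma_kernel_le x a b : 1 <= x -> 0 < a < b ->
  RInt (gamma_kernel x) a b <= 2 * exp ((x - 1) * ln (2 * x)).
Proof.
  intros Hx Hab. set (K := exp ((x - 1) * ln (2 * x))).
  assert (HI := is_RInt_scal _ _ _ K _ (is_RInt_exp_half a b)).
  assert (H := is_RInt_le _ _ _ _ _ _ (Rlt_le _ _ (proj2 Hab))
    (is_RInt_pos _ (gamma_kernel_continuous x) a b (proj1 Hab) ltac:(lra)) HI).
  unfold scal in H; simpl in H; unfold mult in H; simpl in H.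
  eapply Rle_trans; [apply H|].
  - intros s Hs. apply gamma_kernel_le_exp_half; lra.
  - assert (exp (- a / 2) <= 1) by (rewrite <- exp_0; apply exp_le; lra).
    pose proof (exp_pos (- b / 2)). assert (0 < K) by apply exp_pos. nra.
Qed.

Lemma Gamma_is_lub x : 1 <= x -> is_lub (compact_integrals (gamma_kernel x)) (Gamma x).
Proof.
  intros Hx.
  destruct (compact_integrals_lub (gamma_kernel x) _
    (fun a b Hab => RInt_gamma_kernel_le x a b Hx Hab)) as [l Hl].
  replace (Gamma x) with l; [exact Hl|].
  symmetry. change (RInt_gen (gamma_kernel x) (at_right 0) (Rbar_locally p_infty) = l).
  apply (is_RInt_gen_unique (V := R_CompleteNormedModule)).
  apply is_RInt_gen_sup; [apply gamma_kernel_continuous | | exact Hl].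
  intros s _. apply Rlt_le, gamma_kernel_pos.
Qed.

Lemma is_RInt_gen_Gamma x : 1 <= x ->
  is_RInt_gen (gamma_kernel x) (at_right 0) (Rbar_locally p_infty) (Gamma x).
Proof.
  intros Hx. apply is_RInt_gen_sup.
  - apply gamma_kernel_continuous.
  - intros s _. apply Rlt_le, gamma_kernel_pos.
  - apply Gamma_is_lub, Hx.
Qed.

Lemma RInt_gamma_kernel_le_Gamma x a b : 1 <= x -> 0 < a < b ->
  RInt (gamma_kernel x) a b <= Gamma x.
Proof. intros Hx Hab. apply (proj1 (Gamma_is_lub x Hx)). exists a, b. auto. Qed.

Lemma Gamma_le x M : 1 <= x ->
  (forall a b, 0 < a < b -> RInt (gamma_kernel x) a b <= M) -> Gamma x <= M.
Proof.
  intros Hx HM. apply (proj2 (Gamma_is_lub x Hx)). intros y [a [b [Hab ->]]]. auto.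
Qed.

Lemma Gamma_pos x : 1 <= x -> 0 < Gamma x.
Proof.
  intros Hx. eapply Rlt_le_trans; [|apply (RInt_gamma_kernel_le_Gamma x 1 2); lra].
  apply RInt_gt_0; [lra | intros; apply gamma_kernel_pos |].
  intros s Hs. apply gamma_kernel_continuous. lra.
Qed.

Lemma gamma_kernel_interpolate x z lam A B s : 0 <= lam <= 1 -> 0 < A -> 0 < B ->
  gamma_kernel (lam * x + (1 - lam) * z) s <=
  exp (lam * ln A + (1 - lam) * ln B) *
    (lam / A * gamma_kernel x s + (1 - lam) / B * gamma_kernel z s).
Proof.
  intros Hl HA HB. set (K := lam * ln A + (1 - lam) * ln B).
  rewrite !gamma_kernel_exp.
  replace ((lam * x + (1 - lam) * z - 1) * ln s + - s) with
    (lam * ((x - 1) * ln s + - s - ln A + K) + (1 - lam) * ((z - 1) * ln s + - s - ln B + K))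
    by (unfold K; ring).
  eapply Rle_trans; [apply exp_convex, Hl|].
  right. unfold Rminus. rewrite !exp_plus, !exp_Ropp, !exp_ln by auto.
  pose proof (exp_pos s). field. repeat split; lra.
Qed.

(* Hölder's inequality for the two kernels, obtained by integrating the pointwise
   interpolation with [A = Gamma x] and [B = Gamma z]. *)
Lemma ln_Gamma_convex x z lam : 1 <= x -> 1 <= z -> 0 <= lam <= 1 ->
  ln (Gamma (lam * x + (1 - lam) * z)) <= lam * ln (Gamma x) + (1 - lam) * ln (Gamma z).
Proof.
  intros Hx Hz Hl.
  assert (Hy : 1 <= lam * x + (1 - lam) * z) by nra.
  set (A := Gamma x). set (B := Gamma z).
  assert (HA : 0 < A) by (apply Gamma_pos; auto).
  assert (HB : 0 < B) by (apply Gamma_pos; auto).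
  set (K := lam * ln A + (1 - lam) * ln B).
  rewrite <- (ln_exp K). apply ln_le; [apply Gamma_pos, Hy|].
  apply Gamma_le; [exact Hy|]. intros a b Hab.
  assert (Hr : forall w, is_RInt (gamma_kernel w) a b (RInt (gamma_kernel w) a b))
    by (intro w; apply is_RInt_pos; [apply gamma_kernel_continuous | lra | lra]).
  assert (HI := is_RInt_scal _ _ _ (exp K) _
     (is_RInt_plus _ _ _ _ _ _ (is_RInt_scal _ _ _ (lam / A) _ (Hr x))
                                  (is_RInt_scal _ _ _ ((1 - lam) / B) _ (Hr z)))).
  assert (H := is_RInt_le _ _ _ _ _ _ (Rlt_le _ _ (proj2 Hab))
    (Hr (lam * x + (1 - lam) * z)) HI).
  unfold scal, plus in H; simpl in H; unfold mult in H; simpl in H.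
  eapply Rle_trans; [apply H; intros; apply gamma_kernel_interpolate; auto|].
  pose proof (RInt_gamma_kernel_le_Gamma x a b Hx Hab).
  pose proof (RInt_gamma_kernel_le_Gamma z a b Hz Hab).
  pose proof (mul_div_le lam A _ ltac:(lra) HA ltac:(eassumption)).
  pose proof (mul_div_le (1 - lam) B _ ltac:(lra) HB ltac:(eassumption)).
  pose proof (exp_pos K). nra.
Qed.

Lemma is_derive_gamma_kernel_succ x s : 0 < s ->
  is_derive (gamma_kernel (x + 1)) s (x * gamma_kernel x s - gamma_kernel (x + 1) s).
Proof.
  intros Hs. unfold gamma_kernel, Rpower. auto_derive; [exact Hs|].
  replace (x + 1 - 1) with x by ring.
  replace (exp ((x - 1) * ln s)) with (exp (x * ln s) * / s).
  - field. lra.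
  - replace ((x - 1) * ln s) with (x * ln s + - ln s) by ring.
    rewrite exp_plus, exp_Ropp, exp_ln; auto.
Qed.

Lemma gamma_kernel_lim_0 w : 2 <= w -> filterlim (gamma_kernel w) (at_right 0) (locally 0).
Proof.
  intros Hw P [eps He]. unfold filtermap.
  assert (Hd : 0 < Rmin eps 1) by (apply Rmin_glb_lt; [apply cond_pos | lra]).
  exists (mkposreal _ Hd). intros y Hy Hy0. apply He.
  rewrite ball_Rabs, Rminus_0_r in Hy |- *. simpl in Hy.
  apply Rabs_def2 in Hy. pose proof (Rmin_l eps 1). pose proof (Rmin_r eps 1).
  rewrite Rabs_right by (apply Rle_ge, Rlt_le, gamma_kernel_pos).
  rewrite gamma_kernel_exp, exp_plus.
  assert (ln y <= 0) by (rewrite <- ln_1; apply ln_le; lra).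
  assert (exp ((w - 1) * ln y) <= y) by (rewrite <- (exp_ln y) at 2 by lra; apply exp_le; nra).
  assert (exp (- y) <= 1) by (rewrite <- exp_0; apply exp_le; lra).
  pose proof (exp_pos ((w - 1) * ln y)). pose proof (exp_pos (- y)). nra.
Qed.

Lemma gamma_kernel_lim_p_infty w : 1 <= w ->
  filterlim (gamma_kernel w) (Rbar_locally p_infty) (locally 0).
Proof.
  intros Hw P [eps He]. unfold filtermap.
  set (K := exp ((w - 1) * ln (2 * w))).
  assert (HK : 0 < K) by apply exp_pos.
  assert (He0 : 0 < eps / K) by (apply Rdiv_lt_0_compat; [apply cond_pos | exact HK]).
  exists (Rmax 0 (- 2 * ln (eps / K))). intros s Hs. apply He.
  rewrite ball_Rabs, Rminus_0_r.
  pose proof (Rmax_l 0 (- 2 * ln (eps / K))). pose proof (Rmax_r 0 (- 2 * ln (eps / K))).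
  rewrite Rabs_right by (apply Rle_ge, Rlt_le, gamma_kernel_pos).
  eapply Rle_lt_trans; [apply gamma_kernel_le_exp_half; lra|]. fold K.
  assert (exp (- s / 2) < eps / K)
    by (rewrite <- (exp_ln (eps / K)) by exact He0; apply exp_increasing; lra).
  apply Rmult_lt_reg_r with (/ K); [apply Rinv_0_lt_compat, HK|].
  replace (K * exp (- s / 2) * / K) with (exp (- s / 2)) by (field; lra). exact H1.
Qed.

(* Integration by parts: [x * s^(x-1) e^(-s) - s^x e^(-s)] is the derivative of
   [s^x e^(-s)], which vanishes at both ends. *)
Lemma is_RInt_gen_Gamma_succ_diff x : 1 <= x ->
  is_RInt_gen (fun s => x * gamma_kernel x s - gamma_kernel (x + 1) s)
    (at_right 0) (Rbar_locally p_infty) 0.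
Proof.
  intros Hx.
  set (phi := gamma_kernel (x + 1)).
  assert (HD : forall s, 0 < s -> Derive phi s = x * gamma_kernel x s - phi s)
    by (intros s Hs; apply is_derive_unique, is_derive_gamma_kernel_succ, Hs).
  assert (Hpos : forall a b y, 0 < a -> 0 < b -> Rmin a b <= y -> 0 < y)
    by (intros a b y Ha Hb Hy; assert (0 < Rmin a b) by (apply Rmin_glb_lt; auto); lra).
  assert (Hparts : is_RInt_gen (Derive phi) (at_right 0) (Rbar_locally p_infty) (0 - 0)).
  { apply is_RInt_gen_Derive.
    - apply (filter_prod_pos (fun a b => forall y, Rmin a b <= y <= Rmax a b -> ex_derive phi y)).
      intros a b Ha Hb y Hy. eexists. apply is_derive_gamma_kernel_succ, (Hpos a b); lra.
    - apply (filter_prod_pos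
        (fun a b => forall y, Rmin a b <= y <= Rmax a b -> continuous (Derive phi) y)).
      intros a b Ha Hb y Hy. assert (Hy0 : 0 < y) by (apply (Hpos a b); lra).
      apply (continuous_ext_loc _ (fun s => x * gamma_kernel x s - phi s)).
      + assert (Hd : 0 < y / 2) by lra.
        exists (mkposreal _ Hd). intros z Hz.
        rewrite ball_Rabs in Hz. simpl in Hz. apply Rabs_def2 in Hz.
        symmetry. apply HD. lra.
      + apply (continuous_minus (K := R_AbsRing) (V := R_NormedModule)).
        * apply (continuous_scal_r (K := R_AbsRing) (V := R_NormedModule)).
          apply gamma_kernel_continuous, Hy0.
        * apply gamma_kernel_continuous, Hy0.
    - apply gamma_kernel_lim_0. lra.
    - apply gamma_kernel_lim_p_infty. lra. }
  rewrite Rminus_0_r in Hparts.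
  apply (is_RInt_gen_ext (Derive phi)); [|exact Hparts].
  apply (filter_prod_pos (fun a b => forall y, Rmin a b < y < Rmax a b -> _ = _)).
  intros a b Ha Hb y Hy. apply HD, (Hpos a b); lra.
Qed.

Lemma Gamma_succ x : 1 <= x -> Gamma (x + 1) = x * Gamma x.
Proof.
  intros Hx.
  assert (H : is_RInt_gen (fun s => x * gamma_kernel x s - gamma_kernel (x + 1) s)
                (at_right 0) (Rbar_locally p_infty) (x * Gamma x - Gamma (x + 1)))
    by exact (is_RInt_gen_minus _ _ _ _ (is_RInt_gen_scal _ x _ (is_RInt_gen_Gamma x Hx))
                (is_RInt_gen_Gamma (x + 1) ltac:(lra))).
  pose proof (is_RInt_gen_unique (V := R_CompleteNormedModule) _ _ H) as U.
  rewrite (is_RInt_gen_unique (V := R_CompleteNormedModule) _ _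
    (is_RInt_gen_Gamma_succ_diff x Hx)) in U.
  lra.
Qed.

(** * The digamma function *)

Lemma ln_Gamma_succ s : 1 <= s -> ln (Gamma (s + 1)) = ln (Gamma s) + ln s.
Proof.
  intros Hs. rewrite Gamma_succ, ln_mult by (auto using Gamma_pos; lra). ring.
Qed.

Lemma ln_Gamma_shift s m : 1 <= s ->
  ln (Gamma (s + INR (S m))) = ln (Gamma s) + sum_f_R0 (fun k => ln (s + INR k)) m.
Proof.
  intros Hs. induction m as [|m IH].
  - simpl. rewrite Rplus_0_r. apply ln_Gamma_succ, Hs.
  - rewrite S_INR. replace (s + (INR (S m) + 1)) with (s + INR (S m) + 1) by ring.
    rewrite ln_Gamma_succ by (pose proof (pos_INR (S m)); lra).
    rewrite IH. cbn [sum_f_R0]. ring.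
Qed.

Lemma ln_Gamma_chord x y z : 1 <= x -> x < z -> x <= y <= z ->
  (z - x) * ln (Gamma y) <= (z - y) * ln (Gamma x) + (y - x) * ln (Gamma z).
Proof.
  intros Hx Hxz Hy.
  set (lam := (z - y) / (z - x)).
  assert (Hl : 0 <= lam <= 1).
  { unfold lam. split.
    - apply Rdiv_le_0_compat; lra.
    - apply Rle_div_l; lra. }
  pose proof (ln_Gamma_convex x z lam Hx ltac:(lra) Hl) as C.
  replace (lam * x + (1 - lam) * z) with y in C by (unfold lam; field; lra).
  apply Rmult_le_compat_l with (r := z - x) in C; [|lra].
  replace ((z - x) * (lam * ln (Gamma x) + (1 - lam) * ln (Gamma z))) with
    ((z - y) * ln (Gamma x) + (y - x) * ln (Gamma z)) in C by (unfold lam; field; lra).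
  exact C.
Qed.

Definition harmonic m := sum_f_R0 (fun k => / INR (S k)) m.

Lemma harmonic_sub_ln_le_1 m : harmonic m - ln (INR (S m)) <= 1.
Proof.
  unfold harmonic. induction m as [|m IH].
  - simpl. rewrite ln_1. lra.
  - cbn [sum_f_R0].
    assert (HS : 0 < INR (S m)) by (apply lt_0_INR; lia).
    assert (E : INR (S (S m)) = INR (S m) + 1) by apply S_INR.
    pose proof (ln_add_sub_ge (INR (S m)) 1 HS ltac:(lra)) as H.
    rewrite <- E in H. unfold Rdiv in H. rewrite Rmult_1_l in H.
    lra.
Qed.

Lemma sum_ln_shift_le t h m : 1 < t -> 0 <= h ->
  sum_f_R0 (fun k => ln (t + h + INR k)) m - sum_f_R0 (fun k => ln (t + INR k)) m
  <= h * (harmonic m - 1 + / t).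
Proof.
  intros Ht Hh. unfold harmonic. induction m as [|m IH].
  - simpl. rewrite !Rplus_0_r.
    replace (h * (/ 1 - 1 + / t)) with (h / t) by (field; lra).
    apply ln_add_sub_le; lra.
  - cbn [sum_f_R0]. pose proof (pos_INR (S m)).
    assert (ln (t + INR (S m) + h) - ln (t + INR (S m)) <= h * / INR (S (S m))).
    { eapply Rle_trans; [apply ln_add_sub_le; lra|].
      apply Rmult_le_compat_l; [lra|].
      apply Rinv_le_contravar; rewrite (S_INR (S m)); lra. }
    replace (t + h + INR (S m)) with (t + INR (S m) + h) by ring.
    lra.
Qed.

Lemma ln_Gamma_quotient_le t h : 1 < t -> 0 < h <= 1 ->
  (ln (Gamma (t + h)) - ln (Gamma t)) / h <= ln t.
Proof.
  intros Ht Hh.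
  pose proof (ln_Gamma_chord t (t + h) (t + 1) ltac:(lra) ltac:(lra) ltac:(lra)) as C.
  rewrite ln_Gamma_succ in C by lra.
  replace (t + 1 - t) with 1 in C by ring.
  replace (t + h - t) with h in C by ring.
  replace (t + 1 - (t + h)) with (1 - h) in C by ring.
  apply Rle_div_l; lra.
Qed.

(* Convexity bounds the quotient at [t] by the slope [ln (t + m)] far out at
   [t + m + 1]; the shift by [m + 1] costs at most [h (harmonic m - 1 + 1/t)]. *)
Lemma ln_Gamma_quotient_ge t h m : 1 < t -> 0 < h <= 1 ->
  1 - / t - (harmonic m - ln (INR (S m))) <= (ln (Gamma (t + h)) - ln (Gamma t)) / h.
Proof.
  intros Ht Hh. pose proof (pos_INR m).
  set (u := t + INR m).
  pose proof (ln_Gamma_shift (t + h) m ltac:(lra)) as Sh.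
  pose proof (ln_Gamma_shift t m ltac:(lra)) as S0.
  rewrite S_INR in Sh, S0.
  replace (t + h + (INR m + 1)) with (u + 1 + h) in Sh by (unfold u; ring).
  replace (t + (INR m + 1)) with (u + 1) in S0 by (unfold u; ring).
  pose proof (sum_ln_shift_le t h m Ht ltac:(lra)) as D.
  pose proof (ln_Gamma_chord u (u + 1) (u + 1 + h) ltac:(unfold u; lra) ltac:(lra) ltac:(lra)) as C.
  replace (u + 1 + h - u) with (1 + h) in C by ring.
  replace (u + 1 + h - (u + 1)) with h in C by ring.
  replace (u + 1 - u) with 1 in C by ring.
  assert (E : h * ln (Gamma (u + 1)) = h * ln (Gamma u) + h * ln u)
    by (rewrite ln_Gamma_succ by (unfold u; lra); ring).
  assert (h * ln (INR (S m)) <= h * ln u).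
  { apply Rmult_le_compat_l; [lra|].
    apply ln_le; [apply lt_0_INR; lia | rewrite S_INR; unfold u; lra]. }
  apply Rle_div_r; lra.
Qed.

Lemma digamma_ge t m : 1 < t -> 1 - / t - (harmonic m - ln (INR (S m))) <= digamma t.
Proof.
  intros Ht. apply (Derive_ge_of_forward _ _ _ (ln t)).
  intros h Hh. split; [apply ln_Gamma_quotient_ge | apply ln_Gamma_quotient_le]; auto.
Qed.

Lemma euler_gamma_add_digamma_pos t : 1 < t -> 0 < euler_gamma + digamma t.
Proof.
  intros Ht.
  assert (1 - / t - digamma t <= euler_gamma).
  { apply (real_Lim_seq_bounds _ _ 1). intro m. split.
    - pose proof (digamma_ge t m Ht). unfold harmonic in *. lra.
    - apply harmonic_sub_ln_le_1. }
  assert (/ t < 1) by (rewrite <- Rinv_1; apply Rinv_lt_contravar; lra).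
  lra.
Qed.

Theorem lemma3p3 (a b q t : R) :
  0 < a -> 0 < b -> 0 < q < 1 -> 1 < t ->
  a * euler_gamma - b * ln (1 - q) + a * digamma t - b * qdigamma q t > 0.
Proof.
  intros Ha Hb Hq Ht.
  pose proof (euler_gamma_add_digamma_pos t Ht).
  pose proof (qdigamma_le q Hq t ltac:(lra)).
  assert (0 < a * (euler_gamma + digamma t)) by (apply Rmult_lt_0_compat; auto).
  assert (0 <= b * (- ln (1 - q) - qdigamma q t)) by (apply Rmult_le_pos; lra).
  lra.
Qed.
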